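(* Let $\rho_0=\sum_{n=1}^Np_n|n\rangle\langle n|$ be a density matrix on $\mathbb{C}^N$ ($N\ge2$) with eigenvalues in decreasing order $p_1\ge p_2\ge\dots\ge p_N$, and let $\gamma>0$. For Hermitian $G$ put $$QFI(\rho_0,G)=2\sum_{i\neq j}\frac{(p_i-p_j)^2}{p_i+p_j}|G_{ij}|^2,\qquad G_{ij}=\langle i|G|j\rangle,$$ where terms with $p_i+p_j=0$ are omitted. Then $$\max_{G=G^\dagger,\ \mathrm{Tr}[G^2]\le2\gamma^2}QFI(\rho_0,G)=4\gamma^2\frac{(p_1-p_N)^2}{p_1+p_N}.$$ The maximum is attained by a Hermitian $G$ with $|G_{1N}|=|G_{N1}|=\gamma$ and all other matrix elements (including diagonal ones) equal to $0$.
   Context: The expression $QFI(\rho_0,G)$ is the quantum Fisher information of the unitary family $\rho_\lambda=e^{-i\lambda G}\rho_0e^{i\lambda G}$ at $\lambda=0$. *)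

From HB Require Import structures.
From mathcomp Require Import all_boot all_order all_algebra.
From mathcomp Require Import complex.
Set Implicit Arguments. Unset Strict Implicit. Unset Printing Implicit Defensive.
Import Order.TTheory GRing.Theory Num.Theory.
Local Open Scope ring_scope.

Definition rc (R : rcfType) (x : R) : R[i] := real_complex R x.

Definition is_hermitian (R : rcfType) (N : nat) (G : 'M[R[i]]_N) : Prop :=
  forall i j : 'I_N, G j i = (G i j)^*.

(* QFI(rho0, G) for rho0 = diag(p_1,...,p_N) in the eigenbasis |n>:
   2 * sum_{i <> j, p_i + p_j <> 0} (p_i - p_j)^2/(p_i + p_j) |G_ij|^2. *)
Definition QFI (R : rcfType) (N : nat) (p : 'I_N -> R) (G : 'M[R[i]]_N) : R[i] :=
  2 * \sum_(i < N) \sum_(j < N | (i != j) && (p i + p j != 0))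
        rc ((p i - p j) ^+ 2 / (p i + p j)) * `|G i j| ^+ 2.

From HB Require Import structures.
From mathcomp Require Import all_boot all_order all_algebra.
From mathcomp Require Import complex.
From mathcomp Require Import ring lra.
Set Implicit Arguments. Unset Strict Implicit. Unset Printing Implicit Defensive.
Import Order.TTheory GRing.Theory Num.Theory.
Local Open Scope ring_scope.

(* Hermitian G gives Tr[G^2] = sum_ij |G_ij|^2, so the QFI is a weighted sum of the
   |G_ij|^2 with weights (p_i - p_j)^2/(p_i + p_j) against the budget Tr[G^2].  The
   weight grows when the larger eigenvalue grows or the smaller one shrinks, hence for
   an ordered spectrum every weight is at most that of the pair (p_1, p_N), and the
   budget is best spent entirely on the entries G_1N = G_N1. *)

Definition qfi_coef (R : numFieldType) (x y : R) : R := (x - y) ^+ 2 / (x + y).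

Lemma qfi_coefC (R : numFieldType) (x y : R) : qfi_coef x y = qfi_coef y x.
Proof. by rewrite /qfi_coef [y + x]addrC -opprB sqrrN. Qed.

Lemma qfi_coefxx (R : numFieldType) (x : R) : qfi_coef x x = 0.
Proof. by rewrite /qfi_coef subrr expr0n mul0r. Qed.

Lemma qfi_coef_ge0 (R : realFieldType) (x y : R) :
  0 <= x -> 0 <= y -> 0 <= qfi_coef x y.
Proof. by move=> x_ge0 y_ge0; rewrite /qfi_coef divr_ge0 ?sqr_ge0 ?addr_ge0. Qed.

Section QfiCoefMonotone.

Variable R : realFieldType.
Implicit Types a b A B : R.

Lemma qfi_coef_homo_l a A b : 0 <= b -> b <= a -> a <= A -> 0 < a + b ->
  qfi_coef a b <= qfi_coef A b.
Proof.
move=> b_ge0 ba aA ab_gt0; have Ab_gt0 : 0 < A + b by lra.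
rewrite /qfi_coef ler_pdivrMr // mulrAC ler_pdivlMr // -subr_ge0.
have -> : (A - b) ^+ 2 * (a + b) - (a - b) ^+ 2 * (A + b)
    = (A - a) * ((a - b) * (a + 3 * b) + (A - a) * (a + b)) by ring.
by apply: mulr_ge0; [lra | apply: addr_ge0; apply: mulr_ge0; lra].
Qed.

Lemma qfi_coef_anti_r A b B : 0 <= B -> B <= b -> b <= A -> 0 < A + B ->
  qfi_coef A b <= qfi_coef A B.
Proof.
move=> B_ge0 Bb bA AB_gt0; have Ab_gt0 : 0 < A + b by lra.
rewrite /qfi_coef ler_pdivrMr // mulrAC ler_pdivlMr // -subr_ge0.
have -> : (A - B) ^+ 2 * (A + b) - (A - b) ^+ 2 * (A + B)
    = (b - B) * ((A - b) * (3 * A + b) + (b - B) * (A + b)) by ring.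
by apply: mulr_ge0; [lra | apply: addr_ge0; apply: mulr_ge0; lra].
Qed.

Lemma qfi_coef_le a b A B : 0 <= B -> B <= b -> b <= a -> a <= A ->
  qfi_coef a b <= qfi_coef A B.
Proof.
move=> B_ge0 Bb ba aA; have [ab_gt0 | ab_le0] := ltrP 0 (a + b).
  apply: le_trans (qfi_coef_homo_l _ _ _ _) (qfi_coef_anti_r _ _ _ _); lra.
have [-> ->] : a = 0 /\ b = 0 by split; lra.
by rewrite qfi_coefxx qfi_coef_ge0 //; lra.
Qed.

End QfiCoefMonotone.

Lemma qfi_coef_le_extremes (R : realFieldType) (n : nat) (p : 'I_n.+2 -> R) :
  (forall i, 0 <= p i) -> (forall i j : 'I_n.+2, (i <= j)%N -> p j <= p i) ->
  forall i j, qfi_coef (p i) (p j) <= qfi_coef (p ord0) (p ord_max).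
Proof.
move=> p_ge0 p_anti.
suff ordered (i j : 'I_n.+2) :
    (i <= j)%N -> qfi_coef (p i) (p j) <= qfi_coef (p ord0) (p ord_max).
  by move=> i j; case: (leqP i j) => [/ordered // | /ltnW/ordered]; rewrite qfi_coefC.
by move=> ij; apply: qfi_coef_le; rewrite ?p_ge0 ?p_anti // -ltnS.
Qed.

(* The exclusion of the terms with p_i + p_j = 0 is automatic: there x / 0 = 0. *)
Lemma QFIE (R : rcfType) (N : nat) (p : 'I_N -> R) (G : 'M[R[i]]_N) :
  QFI p G = 2 * \sum_i \sum_(j | i != j) rc (qfi_coef (p i) (p j)) * `|G i j| ^+ 2.
Proof.
congr (_ * _); apply: eq_bigr => i _.
rewrite [RHS](bigID (fun j => p i + p j != 0)) /= [X in _ + X]big1 ?addr0 // => j.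
by rewrite negbK => /andP[_ /eqP pij0]; rewrite /qfi_coef pij0 invr0 mulr0 /rc rmorph0 mul0r.
Qed.

Lemma mxtrace_hermitian_sqr (R : rcfType) (N : nat) (G : 'M[R[i]]_N) :
  is_hermitian G -> \tr (G *m G) = \sum_i \sum_j `|G i j| ^+ 2.
Proof.
move=> G_herm; apply: eq_bigr => i _; rewrite mxE.
by apply: eq_bigr => j _; rewrite (G_herm i j) normCK.
Qed.

Lemma QFI_le_mxtrace (R : rcfType) (N : nat) (p : 'I_N -> R) (G : 'M[R[i]]_N) (M : R) :
  is_hermitian G -> (forall i j, qfi_coef (p i) (p j) <= M) ->
  QFI p G <= 2 * rc M * \tr (G *m G).
Proof.
move=> G_herm coef_le; rewrite QFIE mxtrace_hermitian_sqr // -mulrA ler_pM2l // mulr_sumr.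
apply: ler_sum => i _; rewrite mulr_sumr big_mkcond /=; apply: ler_sum => j _.
have M_ge0 : 0 <= M by have := coef_le i i; rewrite qfi_coefxx.
rewrite /rc /=; case: ifP => _; last by rewrite mulr_ge0 ?exprn_ge0 ?normr_ge0 ?ler0c.
by rewrite ler_wpM2r ?exprn_ge0 ?normr_ge0 ?lecR.
Qed.

Definition on_pair (N : nat) (a b i j : 'I_N) : bool :=
  ((i == a) && (j == b)) || ((i == b) && (j == a)).

Lemma double_sum_on_pair (V : nmodType) (N : nat) (a b : 'I_N) (F : 'I_N -> 'I_N -> V) :
  a != b -> (forall i j, ~~ on_pair a b i j -> F i j = 0) ->
  \sum_i \sum_j F i j = F a b + F b a.
Proof.
move=> ab F0; rewrite (bigD1 a) // (bigD1 b) 1?eq_sym //= addrA.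
rewrite [X in _ + X]big1 ?addr0 => [|i /andP[ia ib]]; last first.
  by apply: big1 => j _; rewrite F0 // /on_pair (negbTE ia) (negbTE ib).
rewrite (bigD1 b) //= big1 ?addr0 => [|j jb]; last first.
  by rewrite F0 // /on_pair eqxx (negbTE jb) /= (negbTE ab).
rewrite (bigD1 a) 1?eq_sym //= big1 ?addr0 // => j ja.
by rewrite F0 // /on_pair eqxx (negbTE ja) eq_sym (negbTE ab).
Qed.

Section PairMatrix.

Variables (R : rcfType) (N : nat) (a b : 'I_N) (c : R).
Hypotheses (ab : a != b) (c_ge0 : 0 <= c).

Definition pair_mx : 'M[R[i]]_N := \matrix_(i, j) if on_pair a b i j then rc c else 0.

Lemma pair_mx_hermitian : is_hermitian pair_mx.
Proof.
move=> i j; rewrite !mxE /on_pair orbC [(j == a) && _]andbC [(j == b) && _]andbC.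
by case: ifP; rewrite ?conjC0 // geC0_conj ?ler0c.
Qed.

Lemma pair_mx_norm_sqr i j :
  `|pair_mx i j| ^+ 2 = if on_pair a b i j then rc (c ^+ 2) else 0.
Proof.
by rewrite mxE; case: ifP; rewrite ?normr0 ?expr0n // ger0_norm ?ler0c // /rc rmorphXn.
Qed.

Lemma mxtrace_pair_mx_sqr : \tr (pair_mx *m pair_mx) = rc (2 * c ^+ 2).
Proof.
rewrite (mxtrace_hermitian_sqr pair_mx_hermitian).
rewrite (double_sum_on_pair ab) => [|i j /negbTE off]; last by rewrite pair_mx_norm_sqr off.
by rewrite !pair_mx_norm_sqr /on_pair !eqxx orbT /= /rc -rmorphD mulr2n mulrDl mul1r.
Qed.

Lemma QFI_pair_mx (p : 'I_N -> R) :
  QFI p pair_mx = rc (4 * c ^+ 2 * qfi_coef (p a) (p b)).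
Proof.
rewrite QFIE; under eq_bigr => i _ do rewrite big_mkcond.
rewrite (double_sum_on_pair ab) => [|i j /negbTE off]; last first.
  by case: ifP => // _; rewrite pair_mx_norm_sqr off mulr0.
rewrite ab eq_sym ab !pair_mx_norm_sqr /on_pair !eqxx orbT /= [qfi_coef (p b) _]qfi_coefC.
have -> : 4 * c ^+ 2 * qfi_coef (p a) (p b)
    = 2 * (qfi_coef (p a) (p b) * c ^+ 2 + qfi_coef (p a) (p b) * c ^+ 2) by ring.
by rewrite /rc /= [RHS]rmorphM rmorph_nat !rmorphD !rmorphM.
Qed.

End PairMatrix.

(* N = n.+2 >= 2; index 1 is ord0 and index N is ord_max. *)
Theorem mainTheorem6 (R : rcfType) (n : nat) (p : 'I_n.+2 -> R) (gamma : R) :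
  (forall i, 0 <= p i) ->
  \sum_(i < n.+2) p i = 1 ->
  (forall i j : 'I_n.+2, (i <= j)%N -> p j <= p i) ->
  0 < gamma ->
  (forall G : 'M[R[i]]_n.+2, is_hermitian G ->
     \tr (G *m G) <= rc (2 * gamma ^+ 2) ->
     QFI p G <= rc (4 * gamma ^+ 2 * (p ord0 - p ord_max) ^+ 2 / (p ord0 + p ord_max)))
  /\
  (exists G : 'M[R[i]]_n.+2,
     [/\ is_hermitian G,
         \tr (G *m G) <= rc (2 * gamma ^+ 2),
         `|G ord0 ord_max| = rc gamma /\ `|G ord_max ord0| = rc gamma,
         (forall i j : 'I_n.+2, ~ ((i == ord0) && (j == ord_max)) ->
            ~ ((i == ord_max) && (j == ord0)) -> G i j = 0) &
         QFI p G = rc (4 * gamma ^+ 2 * (p ord0 - p ord_max) ^+ 2 / (p ord0 + p ord_max))]).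
Proof.
move=> p_ge0 _ p_anti /ltW gamma_ge0.
have ends : (ord0 : 'I_n.+2) != ord_max by [].
rewrite -mulrA -[_ / _]/(qfi_coef (p ord0) (p ord_max)).
set M := qfi_coef _ _.
split=> [G G_herm G_tr | ].
  apply: le_trans (QFI_le_mxtrace G_herm (qfi_coef_le_extremes p_ge0 p_anti)) _.
  have -> : rc (4 * gamma ^+ 2 * M) = 2 * rc M * rc (2 * gamma ^+ 2).
    by rewrite /rc -[2](rmorph_nat (real_complex R)) -!rmorphM; congr (_ _); ring.
  by rewrite ler_wpM2l // mulr_ge0 // /rc /= ler0c qfi_coef_ge0.
exists (pair_mx ord0 ord_max gamma); split.
- exact: pair_mx_hermitian.
- by rewrite (mxtrace_pair_mx_sqr ends gamma_ge0).
- by split; rewrite mxE /on_pair !eqxx ?orbT ger0_norm ?ler0c.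
- by move=> i j /negP/negbTE i0j /negP/negbTE j0i; rewrite mxE /on_pair i0j j0i.
- exact: (QFI_pair_mx ends gamma_ge0).
Qed.
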